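(* Every locally fair Pagerank algorithm is $\phi$-fair, i.e., its pagerank vector $\mathbf{p}$ satisfies $\sum_{j\in R}\mathbf{p}[j] = \phi$.
   Context: Let $G=(V,E)$ be a graph whose node set is partitioned into a protected (red) group $R\subseteq V$ and a blue group $B = V\setminus R$, and let $\phi\in(0,1)$. A Pagerank algorithm on $G$ is specified by a row-stochastic transition matrix $\mathbf{P}$ over $V$, a jump (restart) probability $\gamma\in(0,1)$, and a jump vector $\mathbf{v}$ that is a probability distribution over $V$; its pagerank vector $\mathbf{p}$ is the probability distribution satisfying $\mathbf{p}^T = (1-\gamma)\mathbf{p}^T\mathbf{P} + \gamma\,\mathbf{v}^T$. Such an algorithm is called $\phi$-fair if the total pagerank mass it assigns to the red nodes equals $\phi$. The algorithm is called locally fair if every row of its transition matrix is $\phi$-fair, i.e., $\sum_{j\in R}\mathbf{P}[i,j] = \phi$ for every node $i\in V$, and its jump vector is $\phi$-fair, i.e., $\sum_{j\in R}\mathbf{v}[j] = \phi$. (Examples include transition matrices in which each node sends probability $\phi$ to red nodes and $1-\phi$ to blue nodes, either split among its neighbors of each color or partly via a ''residual'' redirected to the underrepresented color, combined with the jump vector giving $\phi/|R|$ to each red node and $(1-\phi)/|B|$ to each blue node.) *)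

From mathcomp Require Import all_boot all_order all_algebra.
Set Implicit Arguments. Unset Strict Implicit. Unset Printing Implicit Defensive.
Import Order.TTheory GRing.Theory Num.Theory.
Local Open Scope ring_scope.

Definition is_distribution (R : realFieldType) (V : finType) (v : V -> R) : Prop :=
  (forall i, 0 <= v i) /\ \sum_(i : V) v i = 1.

Definition row_stochastic (R : realFieldType) (V : finType) (P : V -> V -> R) : Prop :=
  forall i, is_distribution (P i).

Definition is_pagerank (R : realFieldType) (V : finType) (P : V -> V -> R)
    (gamma : R) (v : V -> R) (p : V -> R) : Prop :=
  is_distribution p /\
  forall j, p j = (1 - gamma) * (\sum_(i : V) p i * P i j) + gamma * v j.

Definition phi_fair_vec (R : realFieldType) (V : finType) (Red : {set V})
    (phi : R) (x : V -> R) : Prop :=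
  \sum_(j in Red) x j = phi.

Definition locally_fair (R : realFieldType) (V : finType) (Red : {set V})
    (phi : R) (P : V -> V -> R) (v : V -> R) : Prop :=
  (forall i, phi_fair_vec Red phi (P i)) /\ phi_fair_vec Red phi v.

From mathcomp Require Import all_boot all_order all_algebra.
Set Implicit Arguments. Unset Strict Implicit. Unset Printing Implicit Defensive.
Import Order.TTheory GRing.Theory Num.Theory.
Local Open Scope ring_scope.

(* One step of the walk maps a distribution to one with red mass phi, because
   every row sends mass phi to the red nodes; the jump vector also has red mass
   phi, so the pagerank equation makes the red mass of p the convex combination
   (1 - gamma) phi + gamma phi = phi. *)

Lemma sum_vecmul_rowsum_const (R : ringType) (V : finType) (A : {pred V})
    (P : V -> V -> R) (c : R) (x : V -> R) :
  (forall i, \sum_(j in A) P i j = c) ->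
  \sum_(j in A) \sum_(i : V) x i * P i j = (\sum_(i : V) x i) * c.
Proof.
move=> rowP; rewrite exchange_big mulr_suml.
by apply: eq_bigr => i _; rewrite -mulr_sumr rowP.
Qed.

Theorem theorem4p1 (R : realFieldType) (V : finType) (Red : {set V}) (phi : R)
    (P : V -> V -> R) (gamma : R) (v p : V -> R) :
  0 < phi < 1 ->
  row_stochastic P ->
  0 < gamma < 1 ->
  is_distribution v ->
  is_pagerank P gamma v p ->
  locally_fair Red phi P v ->
  phi_fair_vec Red phi p.
Proof.
move=> _ _ _ _ [[_ p_sum1] p_fix] [P_fair v_fair].
rewrite /phi_fair_vec (eq_bigr _ (fun j _ => p_fix j)) big_split /=.
rewrite -!mulr_sumr (sum_vecmul_rowsum_const p P_fair) p_sum1 mul1r v_fair.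
by rewrite mulrBl mul1r subrK.
Qed.
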